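(* Consider conditional probability table (CPT) Bayesian networks on $m$ nodes as described in the context, for an ensemble $\mathcal{G}$ of DAGs on $[m]$ and parameter maps $\mathcal{P}(\mathcal{G})$, and suppose $\theta_{\min}>0$. Then $$\Delta_{\max}:=\max_{i\in[m]}\max_{G\in\mathcal{G}}\sup_{\Theta\in\mathcal{P}(\mathcal{G})}\mathbb{E}_{X_{\pi_i(G)}}[\Delta(\eta_i,\eta_0)]\le 4\log(1/\theta_{\min}),\qquad \sup_{\Theta\in\mathcal{P}(\mathcal{G})}I(S;G\mid\Theta)\le 4nm\log(1/\theta_{\min}).$$
   Context: Each $X_i$ takes values in $[v]$. Given a DAG $G$ and parameter map $\Theta$, node $i$ has a conditional probability table $\Theta_i^G:[v]^{|\pi_i(G)|}\to\Delta_v$ (the probability simplex), and $P(X_i=j\mid X_{\pi_i(G)}=x)=\theta^G_{ij}(x)$; the reference distribution $P_i(\varnothing,\Theta)$ is the table the parameter map assigns to node $i$ when it has no parents. The joint distribution is $\prod_iP_i(x_i\mid x_{\pi_i(G)})$; $S$ is $n$ i.i.d. samples from it; $I(S;G\mid\Theta)$ is the mutual information between $S$ and $G$ with $G$ uniform on $\mathcal{G}$ and $\Theta$ fixed. Viewing the categorical distribution as an exponential family with sufficient statistic $T(x)=(\mathbf{1}[x=j])_{j=1}^v$ and natural parameter $(\log\theta_j)_{j=1}^v$, $\eta_i=(\log\theta^G_{ij}(X_{\pi_i(G)}))_j$ and $\eta_0$ is the natural parameter of $P_i(\varnothing,\Theta)$; $\Delta(\eta_1,\eta_2)=(\eta_1-\eta_2)^T(\tau(\eta_1)-\tau(\eta_2))$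 where $\tau$ is the expected sufficient statistic (the probability vector). $\mathbb{E}_{X_{\pi_i(G)}}$ is expectation over the parents' values under the network's distribution. $\theta_{\min}:=\inf_{\Theta}\min_{G}\min_{i}\min_{x}\min_{j}\theta^G_{ij}(x)$, the minimum probability entry over all tables used, including the parentless tables $P_i(\varnothing,\Theta)$. *)

From HB Require Import structures.
From mathcomp Require Import all_boot all_order all_algebra.
From mathcomp Require Import all_classical all_reals all_analysis.
Set Implicit Arguments. Unset Strict Implicit. Unset Printing Implicit Defensive.
Import Order.TTheory GRing.Theory Num.Theory.
Local Open Scope ring_scope.
Local Open Scope classical_set_scope.

Definition cfg (m v : nat) := {ffun 'I_m -> 'I_v}.

(* A directed graph on [m], given by its parent sets: j \in G i iff j -> i. *)
Definition graph (m : nat) := {ffun 'I_m -> {set 'I_m}}.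

Definition is_dag (m : nat) (G : graph m) : Prop :=
  forall i j : 'I_m, j \in G i -> ~~ connect (fun a b => a \in G b) i j.

(* A parameter map: for node i and parent set pi, the CPT
   x |-> (P(X_i = k | X_pi = x_pi))_k ; it is stored as a function of the
   whole configuration x, required (in is_param) to depend on x only through
   x restricted to pi. The reference table P_i(emptyset, Theta) is Theta i set0. *)
Definition param (R : realType) (m v : nat) :=
  'I_m -> {set 'I_m} -> cfg m v -> 'I_v -> R.

Definition is_param (R : realType) (m v : nat) (Th : param R m v) : Prop :=
  forall (i : 'I_m) (pi : {set 'I_m}),
    (forall x y : cfg m v, (forall j, j \in pi -> x j = y j) ->
        forall k, Th i pi x k = Th i pi y k)
    /\ (forall x k, 0 <= Th i pi x k)
    /\ (forall x, \sum_(k < v) Th i pi x k = 1).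

Definition theta_min (R : realType) (m v : nat) (Gs : {set graph m})
  (PP : param R m v -> Prop) : R :=
  inf [set t : R | exists Th, PP Th /\ exists G, G \in Gs /\
         exists i x k, t = Th i (G i) x k \/ t = Th i finset.set0 x k].

Definition joint (R : realType) (m v : nat) (G : graph m) (Th : param R m v)
  (x : cfg m v) : R := \prod_(i < m) Th i (G i) x (x i).

(* Delta(eta1, eta2) = (eta1 - eta2)^T (tau(eta1) - tau(eta2)) for the
   categorical family, eta = (log p_j)_j, tau(eta) = p. *)
Definition Delta (R : realType) (v : nat) (p q : 'I_v -> R) : R :=
  \sum_(k < v) (ln (p k) - ln (q k)) * (p k - q k).

Definition EDelta (R : realType) (m v : nat) (G : graph m) (Th : param R m v)
  (i : 'I_m) : R :=
  \sum_(x : cfg m v) joint G Th x * Delta (Th i (G i) x) (Th i finset.set0 x).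

Definition sample_lik (R : realType) (m v n : nat) (G : graph m)
  (Th : param R m v) (S : {ffun 'I_n -> cfg m v}) : R :=
  \prod_(k < n) joint G Th (S k).

Definition sample_marg (R : realType) (m v n : nat) (Gs : {set graph m})
  (Th : param R m v) (S : {ffun 'I_n -> cfg m v}) : R :=
  (#|Gs|%:R)^-1 * \sum_(G in Gs) sample_lik G Th S.

(* I(S;G | Theta) with G uniform on Gs (natural log; 0 log 0 = 0 since ln 0 = 0). *)
Definition mutual_info (R : realType) (m v n : nat) (Gs : {set graph m})
  (Th : param R m v) : R :=
  \sum_(G in Gs) (#|Gs|%:R)^-1 *
    \sum_(S : {ffun 'I_n -> cfg m v})
      sample_lik G Th S * ln (sample_lik G Th S / sample_marg Gs Th S).

From HB Require Import structures.
From mathcomp Require Import all_boot all_order all_algebra.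
From mathcomp Require Import all_classical all_reals all_analysis.
From mathcomp Require Import lra zify.
Import Order.TTheory GRing.Theory Num.Theory.
Set Implicit Arguments. Unset Strict Implicit. Unset Printing Implicit Defensive.
Local Open Scope ring_scope.

(* The joint law of a DAG network sums to one: summing out a sink node turns its
   conditional table into 1 without touching the other factors.  When all table
   entries lie in [theta, 1], each coordinate of Delta satisfies
   |ln p - ln q| <= ln (1/theta) and |p - q| <= p + q, so Delta <= 2 ln (1/theta).
   Likewise every likelihood of n samples, and hence the marginal under a uniform
   graph, lies in [theta^(m n), 1], so every log-likelihood ratio and therefore
   I(S; G | Theta) is at most m n ln (1/theta). *)

Section ConfigurationUpdate.
Variables m v : nat.

Definition cfg_upd (x : cfg m v) (s : 'I_m) (k : 'I_v) : cfg m v :=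
  [ffun j => if j == s then k else x j].

Lemma cfg_updE x s k j : cfg_upd x s k j = if j == s then k else x j.
Proof. by rewrite ffunE. Qed.

Lemma sum_cfg_upd (V : nmodType) (F : cfg m v -> V) s (k0 : 'I_v) :
  \sum_(x : cfg m v) F x =
  \sum_(x : cfg m v | x s == k0) \sum_(k < v) F (cfg_upd x s k).
Proof.
rewrite (partition_big (fun x : cfg m v => x s) xpredT) //= [RHS]exchange_big /=.
apply: eq_bigr => k _.
rewrite (reindex_onto (fun x => cfg_upd x s k) (fun y => cfg_upd y s k0)).
  apply: eq_bigl => x; rewrite /= cfg_updE !eqxx /=.
  apply/eqP/eqP => [<-|xs]; first by rewrite cfg_updE eqxx.
  by apply/ffunP => j; rewrite !cfg_updE; case: eqP => // ->.
by move=> y /eqP ys; apply/ffunP => j; rewrite !cfg_updE; case: eqP => // ->.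
Qed.

End ConfigurationUpdate.

Section Dag.
Variables (m : nat) (G : graph m).
Hypothesis dagG : is_dag G.

Lemma dag_irrefl i : i \notin G i.
Proof. by apply/negP => /dagG; rewrite connect0. Qed.

(* A vertex of A with the most ancestors cannot be a parent of another vertex of A. *)
Lemma dag_sink (A : {set 'I_m}) s0 :
  s0 \in A -> exists2 s, s \in A & forall j, j \in A -> s \notin G j.
Proof.
move=> s0A; pose e : rel 'I_m := fun a b => a \in G b.
pose ancestors i := #|[set a | connect e a i]|.
case: (arg_maxnP ancestors s0A) => s sA s_max.
exists s => // j jA; apply/negP => sGj.
have := s_max j jA; rewrite /= leqNgt => /negP; apply.
apply: proper_card; apply/properP; split.
  apply/fintype.subsetP => a; rewrite !inE => /connect_trans; apply.
  exact: connect1.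
by exists j; rewrite inE ?connect0 //; apply: dagG sGj.
Qed.

End Dag.

Section ConditionalTables.
Variables (R : realType) (m v : nat) (Th : param R m v).
Hypothesis Th_param : is_param Th.

Lemma cpt_ge0 i pi x k : 0 <= Th i pi x k.
Proof. by have [_ []] := Th_param i pi. Qed.

Lemma sum_cpt i pi x : \sum_(k < v) Th i pi x k = 1.
Proof. by have [_ []] := Th_param i pi. Qed.

Lemma cpt_le1 i pi x k : Th i pi x k <= 1.
Proof.
by rewrite -(sum_cpt i pi x) (bigD1 k) //= lerDl sumr_ge0 // => j _; apply: cpt_ge0.
Qed.

Lemma eq_cpt i (pi : {set 'I_m}) (x y : cfg m v) :
  (forall j, j \in pi -> x j = y j) -> Th i pi x =1 Th i pi y.
Proof. by have [] := Th_param i pi => + _; apply. Qed.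

Lemma joint_ge0 G x : 0 <= joint G Th x.
Proof. by apply: prodr_ge0 => i _; apply: cpt_ge0. Qed.

Lemma joint_le1 G x : joint G Th x <= 1.
Proof. by apply: prodr_ile1 => i _; rewrite cpt_ge0 cpt_le1. Qed.

Variables (G : graph m) (k0 : 'I_v).
Hypothesis dagG : is_dag G.

Lemma sum_prod_cpt_sink (A : {set 'I_m}) s :
  s \in A -> (forall j, j \in A -> s \notin G j) ->
  (\sum_(x : cfg m v) \prod_(i in A) Th i (G i) x (x i)) * v%:R =
  \sum_(x : cfg m v) \prod_(i in A :\ s) Th i (G i) x (x i).
Proof.
move=> sA s_sink.
have rest_upd x k : \prod_(i in A :\ s) Th i (G i) (cfg_upd x s k) (cfg_upd x s k i)
                    = \prod_(i in A :\ s) Th i (G i) x (x i).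
  apply: eq_bigr => i; rewrite !inE => /andP[/negbTE nis iA].
  rewrite cfg_updE nis; apply: eq_cpt => j jGi; rewrite cfg_updE.
  by case: eqP => // js; move: (s_sink i iA); rewrite -js jGi.
have sink_upd x k : Th s (G s) (cfg_upd x s k) (cfg_upd x s k s) = Th s (G s) x k.
  rewrite cfg_updE eqxx; apply: eq_cpt => j jGs; rewrite cfg_updE.
  by case: eqP => // js; move: (dag_irrefl dagG s); rewrite -{1}js jGs.
under eq_bigr do rewrite (big_setD1 s sA) /=.
rewrite (sum_cfg_upd _ s k0) [RHS](sum_cfg_upd _ s k0) mulr_suml.
apply: eq_bigr => x _; under eq_bigr do rewrite sink_upd rest_upd.
under [RHS]eq_bigr do rewrite rest_upd.
by rewrite -mulr_suml sum_cpt mul1r sumr_const card_ord mulr_natr.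
Qed.

Lemma sum_prod_cpt (A : {set 'I_m}) :
  \sum_(x : cfg m v) \prod_(i in A) Th i (G i) x (x i) = v%:R ^+ (m - #|A|).
Proof.
have [N] := ubnP #|A|; elim: N A => // N IH A /ltnSE cardA.
have [->|[s0 s0A]] := set_0Vmem A.
  under eq_bigr do rewrite big_set0.
  by rewrite sumr_const cards0 subn0 card_ffun !card_ord natrX.
have [s sA s_sink] := dag_sink dagG s0A.
have v_neq0 : v%:R != 0 :> R by rewrite pnatr_eq0 -lt0n (leq_ltn_trans _ (ltn_ord k0)).
apply: (mulIf v_neq0); rewrite (sum_prod_cpt_sink sA s_sink) IH; last first.
  by move: cardA; rewrite (cardsD1 s A) sA.
rewrite -exprSr; congr (_ ^+ _).
by move: (max_card A); rewrite card_ord (cardsD1 s A) sA; lia.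
Qed.

Lemma sum_joint : \sum_(x : cfg m v) joint G Th x = 1.
Proof.
have := sum_prod_cpt [set: 'I_m]; rewrite cardsT card_ord subnn expr0.
by under eq_bigr do rewrite (eq_bigl _ _ (@finset.in_setT _)).
Qed.

End ConditionalTables.

Lemma ln_diff_mul_le (R : realType) (t p q : R) :
  0 < t -> t <= p <= 1 -> t <= q <= 1 ->
  (ln p - ln q) * (p - q) <= ln t^-1 * (p + q).
Proof.
move=> t_gt0 /andP[tp p1] /andP[tq q1].
have ln_bounds r : t <= r -> r <= 1 -> ln t <= ln r <= 0.
  move=> tr r1; rewrite ln_le0 // andbT ler_ln // posrE.
  exact: lt_le_trans tr.
have /andP[ltp lp0] := ln_bounds p tp p1.
have /andP[ltq lq0] := ln_bounds q tq q1.
have ln_diff : `|ln p - ln q| <= ln t^-1.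
  by rewrite lnV ?posrE // ler_norml; apply/andP; split; lra.
have diff : `|p - q| <= p + q by rewrite ler_norml; apply/andP; split; lra.
apply: le_trans (ler_norm _) _.
by rewrite normrM ler_pM.
Qed.

Lemma Delta_le (R : realType) v (t : R) (p q : 'I_v -> R) :
  0 < t -> (forall k, t <= p k <= 1) -> (forall k, t <= q k <= 1) ->
  \sum_(k < v) p k = 1 -> \sum_(k < v) q k = 1 ->
  Delta p q <= 2 * ln t^-1.
Proof.
move=> t_gt0 p_bounds q_bounds sum_p sum_q.
apply: (@le_trans _ _ (\sum_(k < v) ln t^-1 * (p k + q k))).
  by apply: ler_sum => k _; apply: ln_diff_mul_le.
by rewrite -mulr_sumr big_split /= sum_p sum_q mulrC.
Qed.

Section EntryBounds.
Variables (R : realType) (m v : nat) (Th : param R m v) (G : graph m) (t : R).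
Hypotheses (Th_param : is_param Th) (dagG : is_dag G) (t_gt0 : 0 < t).

Lemma EDelta_le (k0 : 'I_v) i :
  (forall x k, t <= Th i (G i) x k) -> (forall x k, t <= Th i finset.set0 x k) ->
  EDelta G Th i <= 2 * ln t^-1.
Proof.
move=> tG t0.
apply: (@le_trans _ _ (\sum_(x : cfg m v) joint G Th x * (2 * ln t^-1))).
  apply: ler_sum => x _; rewrite ler_wpM2l ?joint_ge0 //.
  by apply: Delta_le; rewrite // ?sum_cpt // => k; rewrite ?tG ?t0 cpt_le1.
by rewrite -mulr_suml sum_joint // mul1r.
Qed.

Lemma joint_ge x : (forall i, t <= Th i (G i) x (x i)) -> t ^+ m <= joint G Th x.
Proof.
move=> t_le; rewrite -[m in t ^+ m]card_ord -prodr_const.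
by apply: ler_prod => i _; rewrite ltW ?t_le.
Qed.

Lemma sum_sample_lik n (k0 : 'I_v) :
  \sum_(S : {ffun 'I_n -> cfg m v}) sample_lik G Th S = 1.
Proof.
rewrite /sample_lik -(bigA_distr_bigA (fun (_ : 'I_n) x => joint G Th x)) /=.
by rewrite sum_joint // big1.
Qed.

Lemma sample_lik_bounds n (S : {ffun 'I_n -> cfg m v}) :
  (forall i x, t <= Th i (G i) x (x i)) -> t ^+ m ^+ n <= sample_lik G Th S <= 1.
Proof.
move=> t_le; apply/andP; split; last first.
  by apply: prodr_ile1 => k _; rewrite joint_ge0 ?joint_le1.
rewrite -[n in _ ^+ n]card_ord -prodr_const; apply: ler_prod => k _.
by rewrite exprn_ge0 ?(ltW t_gt0) //=; apply: joint_ge.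
Qed.

End EntryBounds.

Section MutualInformation.
Variables (R : realType) (m v n : nat) (Gs : {set graph m}) (Th : param R m v) (B : R).
Local Notation sample := {ffun 'I_n -> cfg m v}.
Hypotheses (Gs_neq0 : Gs != finset.set0) (B_gt0 : 0 < B).
Hypothesis lik_bounds :
  forall G (S : sample), G \in Gs -> B <= sample_lik G Th S <= 1.
Hypothesis sum_lik :
  forall G, G \in Gs -> \sum_(S : sample) sample_lik G Th S = 1.

Let card_Gs_gt0 : 0 < #|Gs|%:R :> R.
Proof. by rewrite ltr0n card_gt0. Qed.

Lemma sample_marg_ge (S : sample) : B <= sample_marg Gs Th S.
Proof.
rewrite /sample_marg mulrC ler_pdivlMr // mulr_natr -sumr_const.
by apply: ler_sum => G GGs; case/andP: (lik_bounds S GGs).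
Qed.

(* The likelihood ratio is at most 1 / B, since the likelihood is at most 1
   and the marginal, an average of likelihoods, is at least B. *)
Lemma mutual_info_le : mutual_info n Gs Th <= ln B^-1.
Proof.
have ln_ratio_le G (S : sample) : G \in Gs ->
    ln (sample_lik G Th S / sample_marg Gs Th S) <= ln B^-1.
  move=> GGs; have /andP[B_lik lik_le1] := lik_bounds S GGs.
  have lik_gt0 := lt_le_trans B_gt0 B_lik.
  have marg_gt0 := lt_le_trans B_gt0 (sample_marg_ge S).
  rewrite ler_ln ?posrE ?invr_gt0 ?divr_gt0 //.
  apply: (@le_trans _ _ (1 / sample_marg Gs Th S)).
    by rewrite ler_wpM2r // invr_ge0 ltW.
  by rewrite div1r lef_pV2 ?posrE ?sample_marg_ge.
rewrite /mutual_info.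
apply: (@le_trans _ _ (\sum_(G in Gs) #|Gs|%:R^-1 * ln B^-1)); last first.
  by rewrite sumr_const -mulrnAl -mulr_natr mulVf ?mul1r // lt0r_neq0.
apply: ler_sum => G GGs; rewrite ler_wpM2l ?invr_ge0 ?ler0n //.
apply: (@le_trans _ _ (\sum_(S : sample) sample_lik G Th S * ln B^-1)); last first.
  by rewrite -mulr_suml sum_lik ?mul1r.
apply: ler_sum => S _; rewrite ler_wpM2l ?ln_ratio_le //.
by case/andP: (lik_bounds S GGs) => /(lt_le_trans B_gt0)/ltW.
Qed.

End MutualInformation.

Section ThetaMin.
Variables (R : realType) (m v : nat) (Gs : {set graph m}) (PP : param R m v -> Prop).
Hypothesis PP_param : forall Th, PP Th -> is_param Th.

Lemma theta_min_le_cpt Th G i x k : PP Th -> G \in Gs ->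
  theta_min Gs PP <= Th i (G i) x k /\ theta_min Gs PP <= Th i finset.set0 x k.
Proof.
move=> PTh GGs; rewrite /theta_min; set E := [set _ | _]%classic.
have lbE : has_lbound E.
  by exists 0 => y [Th' [PTh' [G' [_ [j [x' [l [->|->]]]]]]]];
    exact: cpt_ge0 (PP_param PTh') _ _ _ _.
by split; apply: (ge_inf lbE); exists Th; split=> //; exists G; split=> //;
  exists i, x, k; [left|right].
Qed.

Lemma theta_min_gt0_le1 : 0 < theta_min Gs PP -> (0 < v)%N /\ theta_min Gs PP <= 1.
Proof.
move=> t_gt0; have := t_gt0; rewrite /theta_min; set E := [set _ | _]%classic.
move=> inf_gt0; have [y [Th [PTh [G [GGs [i [x [k _]]]]]]]] : (E !=set0)%classic.
  by apply/set0P/negP => /eqP E0; move: inf_gt0; rewrite E0 inf0 ltxx.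
split; first exact: leq_ltn_trans (ltn_ord k).
have [t_le _] := theta_min_le_cpt i x k PTh GGs.
exact: le_trans t_le (cpt_le1 (PP_param PTh) _ _ _ _).
Qed.

End ThetaMin.

Theorem lemma7 (R : realType) (m v n : nat) (Gs : {set graph m})
  (PP : param R m v -> Prop) :
  Gs != finset.set0 ->
  (forall G, G \in Gs -> is_dag G) ->
  (forall Th, PP Th -> is_param Th) ->
  0 < theta_min Gs PP ->
  (forall (i : 'I_m) (G : graph m) (Th : param R m v), G \in Gs -> PP Th ->
     EDelta G Th i <= 4 * ln ((theta_min Gs PP)^-1))
  /\
  (forall Th : param R m v, PP Th ->
     mutual_info n Gs Th <= 4 * n%:R * m%:R * ln ((theta_min Gs PP)^-1)).
Proof.
move=> Gs_neq0 dagGs PP_param t_gt0.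
have [v_gt0 t_le1] := theta_min_gt0_le1 PP_param t_gt0.
set t := theta_min Gs PP in t_gt0 t_le1 *.
pose k0 : 'I_v := Ordinal v_gt0.
have lnt_ge0 : 0 <= ln t^-1 by rewrite ln_ge0 // invf_ge1.
have t_le_cpt Th G i x k : PP Th -> G \in Gs ->
    t <= Th i (G i) x k /\ t <= Th i finset.set0 x k.
  exact: theta_min_le_cpt.
split=> [i G Th GGs PTh | Th PTh].
  have := EDelta_le (PP_param _ PTh) (dagGs G GGs) t_gt0 k0
    (fun x k => (t_le_cpt Th G i x k PTh GGs).1)
    (fun x k => (t_le_cpt Th G i x k PTh GGs).2).
  lra.
have := @mutual_info_le R m v n Gs Th (t ^+ m ^+ n) Gs_neq0
  (exprn_gt0 _ (exprn_gt0 _ t_gt0))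
  (fun G S GGs => sample_lik_bounds (PP_param _ PTh) t_gt0 S
     (fun i x => (t_le_cpt Th G i x (x i) PTh GGs).1))
  (fun G GGs => sum_sample_lik (PP_param _ PTh) (dagGs G GGs) n k0).
have lnt : ln t^-1 = - ln t by rewrite lnV ?posrE.
have -> : ln (t ^+ m ^+ n)^-1 = ln t^-1 * m%:R * n%:R.
  by rewrite lnV ?posrE ?exprn_gt0 // !lnXn ?exprn_gt0 // lnt !mulr_natr !mulNrn.
have := mulr_ge0 (mulr_ge0 lnt_ge0 (ler0n R m)) (ler0n R n).
lra.
Qed.
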